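(* Let $R,S,T$ be multirelations $X\leftrightarrow\mathcal{P}Y$. Then (1) if $R\subseteq S$ then $R\cap T\sqsubseteq_\downarrow S\cap T$ and $S\cap T\sqsubseteq_\uparrow R\cap T$; (2) $R\Cap S\sqsubseteq_\downarrow R\sqsubseteq_\downarrow R\Cup R$, $R\Cap R\sqsubseteq_\uparrow R\sqsubseteq_\uparrow R\Cup S$ and $R\Cap R\sqsubseteq_\updownarrow R\sqsubseteq_\updownarrow R\Cup R$; (3) $R\Cap S\sqsubseteq_\downarrow R\Cup S$, $R\Cap S\sqsubseteq_\uparrow R\Cup S$ and $R\Cap S\sqsubseteq_\updownarrow R\Cup S$; (4) with respect to the preorder $\sqsubseteq_\downarrow$, $R\Cap S$ is a greatest lower bound and $R\cup S$ a least upper bound of $R$ and $S$ (unique up to $=_\downarrow$); (5) with respect to the preorder $\sqsubseteq_\uparrow$, $R\Cup S$ is a least upper bound and $R\cup S$ a greatest lower bound of $R$ and $S$ (unique up to $=_\uparrow$).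
   Context: $R\Cup S=\{(a,A\cup B)\mid (a,A)\in R,(a,B)\in S\}$, $R\Cap S=\{(a,A\cap B)\mid (a,A)\in R,(a,B)\in S\}$. $R^{\uparrow}=\{(a,A)\mid\exists B.(a,B)\in R\wedge B\subseteq A\}$, $R^{\downarrow}=\{(a,A)\mid\exists B.(a,B)\in R\wedge A\subseteq B\}$. $R\sqsubseteq_\uparrow S\iff S\subseteq R^{\uparrow}$; $R\sqsubseteq_\downarrow S\iff R\subseteq S^{\downarrow}$; $R\sqsubseteq_\updownarrow S\iff R\sqsubseteq_\downarrow S\wedge R\sqsubseteq_\uparrow S$. $R=_\downarrow S\iff R^{\downarrow}=S^{\downarrow}$, $R=_\uparrow S\iff R^{\uparrow}=S^{\uparrow}$. A greatest lower bound of $R,S$ w.r.t. a preorder $\sqsubseteq$ is an element $L$ with $L\sqsubseteq R$, $L\sqsubseteq S$ and $T\sqsubseteq L$ for every $T$ with $T\sqsubseteq R$ and $T\sqsubseteq S$; least upper bound dually. *)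

From mathcomp Require Import all_boot.
From mathcomp Require Import boolp classical_sets.
Set Implicit Arguments. Unset Strict Implicit. Unset Printing Implicit Defensive.
Local Open Scope classical_set_scope.

Definition mrel (X Y : Type) := set (X * set Y).

Section MRel.
Context {X Y : Type}.

Definition mcup (R S : mrel X Y) : mrel X Y :=
  [set p | exists A B, R (p.1, A) /\ S (p.1, B) /\ p.2 = A `|` B].
Definition mcap (R S : mrel X Y) : mrel X Y :=
  [set p | exists A B, R (p.1, A) /\ S (p.1, B) /\ p.2 = A `&` B].
Definition upc (R : mrel X Y) : mrel X Y :=
  [set p | exists B, R (p.1, B) /\ B `<=` p.2].
Definition downc (R : mrel X Y) : mrel X Y :=
  [set p | exists B, R (p.1, B) /\ p.2 `<=` B].

Definition le_up (R S : mrel X Y) : Prop := S `<=` upc R.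
Definition le_down (R S : mrel X Y) : Prop := R `<=` downc S.
Definition le_updown (R S : mrel X Y) : Prop := le_down R S /\ le_up R S.
Definition eq_down (R S : mrel X Y) : Prop := downc R = downc S.
Definition eq_up (R S : mrel X Y) : Prop := upc R = upc S.
End MRel.

Definition is_glb {T : Type} (le : T -> T -> Prop) (R S L : T) : Prop :=
  le L R /\ le L S /\ forall U, le U R -> le U S -> le U L.
Definition is_lub {T : Type} (le : T -> T -> Prop) (R S L : T) : Prop :=
  le R L /\ le S L /\ forall U, le R U -> le S U -> le L U.

From mathcomp Require Import all_boot.
From mathcomp Require Import boolp classical_sets.
Local Open Scope classical_set_scope.

(* Everything is pointwise in the first component.  [R Cap S] is the greatest
   lower bound for [sqsubseteq_down] because any [C] below some [A] of [R] and
   some [B] of [S] is below [A `&` B]; dually for [R Cup S] and [sqsubseteq_up].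
   The plain union is the least upper bound for [sqsubseteq_down] and the
   greatest lower bound for [sqsubseteq_up], since each preorder is an inclusion
   with its first (resp. second) argument undecorated.  Mutual comparability
   for either preorder means equal down- (resp. up-) closures, which gives
   uniqueness of the bounds. *)

Section Bounds.
Context {T : Type} (le : T -> T -> Prop).

Lemma is_glb_le (R S L M : T) : is_glb le R S L -> is_glb le R S M -> le M L.
Proof. by move=> [_ [_ Lgreatest]] [MR [MS _]]; exact: Lgreatest. Qed.

Lemma is_lub_le (R S L M : T) : is_lub le R S L -> is_lub le R S M -> le L M.
Proof. by move=> [_ [_ Lleast]] [RM [SM _]]; exact: Lleast. Qed.

End Bounds.

Section Multirelations.
Context {X Y : Type}.
Implicit Types R S U : mrel X Y.

Lemma le_down_downc R S : le_down R S -> downc R `<=` downc S.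
Proof.
move=> RS [a C] [B [RB CB]]; have [D [SD BD]] := RS _ RB.
by exists D; split=> //; apply: subset_trans BD.
Qed.

Lemma le_up_upc R S : le_up R S -> upc S `<=` upc R.
Proof.
move=> RS [a C] [B [SB BC]]; have [D [RD DB]] := RS _ SB.
by exists D; split=> //; apply: subset_trans BC.
Qed.

Lemma le_down_antisym R S : le_down R S -> le_down S R -> eq_down R S.
Proof. by move=> RS SR; apply/seteqP; split; apply: le_down_downc. Qed.

Lemma le_up_antisym R S : le_up R S -> le_up S R -> eq_up R S.
Proof. by move=> RS SR; apply/seteqP; split; apply: le_up_upc. Qed.

Lemma subset_le_down R S : R `<=` S -> le_down R S.
Proof. by move=> RS [a C] RC; exists C; split=> //; apply: RS. Qed.

Lemma subset_le_up R S : R `<=` S -> le_up S R.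
Proof. by move=> RS [a C] RC; exists C; split=> //; apply: RS. Qed.

Lemma subset_mcapxx R : R `<=` mcap R R.
Proof. by move=> [a C] RC; exists C, C; rewrite setIid. Qed.

Lemma subset_mcupxx R : R `<=` mcup R R.
Proof. by move=> [a C] RC; exists C, C; rewrite setUid. Qed.

Lemma mcap_le_downl R S : le_down (mcap R S) R.
Proof.
by move=> [a C] [A [B [RA [SB /= ->]]]]; exists A; split=> //;
  apply: subIsetl.
Qed.

Lemma mcap_le_downr R S : le_down (mcap R S) S.
Proof.
by move=> [a C] [A [B [RA [SB /= ->]]]]; exists B; split=> //;
  apply: subIsetr.
Qed.

Lemma mcup_le_upl R S : le_up R (mcup R S).
Proof.
by move=> [a C] [A [B [RA [SB /= ->]]]]; exists A; split=> //;
  apply: subsetUl.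
Qed.

Lemma mcup_le_upr R S : le_up S (mcup R S).
Proof.
by move=> [a C] [A [B [RA [SB /= ->]]]]; exists B; split=> //;
  apply: subsetUr.
Qed.

Lemma le_down_mcap R S U : le_down U R -> le_down U S -> le_down U (mcap R S).
Proof.
move=> UR US [a C] UC; have [A [RA CA]] := UR _ UC; have [B [SB CB]] := US _ UC.
by exists (A `&` B); split; [exists A, B | rewrite subsetI].
Qed.

Lemma le_up_mcup R S U : le_up R U -> le_up S U -> le_up (mcup R S) U.
Proof.
move=> RU SU [a C] UC; have [A [RA AC]] := RU _ UC; have [B [SB BC]] := SU _ UC.
by exists (A `|` B); split; [exists A, B | rewrite subUset].
Qed.

Lemma le_down_setU R S U : le_down R U -> le_down S U -> le_down (R `|` S) U.
Proof. by move=> RU SU p [] ?; [apply: RU | apply: SU]. Qed.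

Lemma le_up_setU R S U : le_up U R -> le_up U S -> le_up U (R `|` S).
Proof. by move=> UR US p [] ?; [apply: UR | apply: US]. Qed.

Lemma mcap_le_down_mcup R S : le_down (mcap R S) (mcup R S).
Proof.
move=> [a C] [A [B [RA [SB /= ->]]]]; exists (A `|` B).
by split; [exists A, B | move=> y [Ay _]; left].
Qed.

Lemma mcap_le_up_mcup R S : le_up (mcap R S) (mcup R S).
Proof.
move=> [a C] [A [B [RA [SB /= ->]]]]; exists (A `&` B).
by split; [exists A, B | move=> y [Ay _]; left].
Qed.

Lemma is_glb_down_mcap R S : is_glb le_down R S (mcap R S).
Proof.
by split; [|split];
  [apply: mcap_le_downl | apply: mcap_le_downr | apply: le_down_mcap].
Qed.

Lemma is_lub_down_setU R S : is_lub le_down R S (R `|` S).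
Proof.
by split; [|split];
  [apply/subset_le_down/subsetUl | apply/subset_le_down/subsetUr |
   apply: le_down_setU].
Qed.

Lemma is_lub_up_mcup R S : is_lub le_up R S (mcup R S).
Proof.
by split; [|split];
  [apply: mcup_le_upl | apply: mcup_le_upr | apply: le_up_mcup].
Qed.

Lemma is_glb_up_setU R S : is_glb le_up R S (R `|` S).
Proof.
by split; [|split];
  [apply/subset_le_up/subsetUl | apply/subset_le_up/subsetUr |
   apply: le_up_setU].
Qed.

End Multirelations.

Theorem lemma5p7 (X Y : Type) (R S T : mrel X Y) :
  (* (1) *)
  (R `<=` S -> le_down (R `&` T) (S `&` T) /\ le_up (S `&` T) (R `&` T)) /\
  (* (2) *)
  (le_down (mcap R S) R /\ le_down R (mcup R R)) /\
  (le_up (mcap R R) R /\ le_up R (mcup R S)) /\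
  (le_updown (mcap R R) R /\ le_updown R (mcup R R)) /\
  (* (3) *)
  (le_down (mcap R S) (mcup R S) /\ le_up (mcap R S) (mcup R S) /\
   le_updown (mcap R S) (mcup R S)) /\
  (* (4) *)
  (is_glb le_down R S (mcap R S) /\
   (forall L, is_glb le_down R S L -> eq_down L (mcap R S)) /\
   is_lub le_down R S (R `|` S) /\
   (forall L, is_lub le_down R S L -> eq_down L (R `|` S))) /\
  (* (5) *)
  (is_lub le_up R S (mcup R S) /\
   (forall L, is_lub le_up R S L -> eq_up L (mcup R S)) /\
   is_glb le_up R S (R `|` S) /\
   (forall L, is_glb le_up R S L -> eq_up L (R `|` S))).
Proof.
have glb_down := is_glb_down_mcap R S; have lub_down := is_lub_down_setU R S.
have lub_up := is_lub_up_mcup R S; have glb_up := is_glb_up_setU R S.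
have RRcap_down : le_down (mcap R R) R := mcap_le_downl R R.
have RRcap_up : le_up (mcap R R) R by apply/subset_le_up/subset_mcapxx.
have RRcup_down : le_down R (mcup R R) by apply/subset_le_down/subset_mcupxx.
have RRcup_up : le_up R (mcup R R) := mcup_le_upl R R.
have capcup_down := mcap_le_down_mcup R S.
have capcup_up := mcap_le_up_mcup R S.
split.
  by move=> RS; split; [apply: subset_le_down | apply: subset_le_up];
    apply: setSI.
split; first by split; [apply: mcap_le_downl |].
split; first by split; [| apply: mcup_le_upl].
split; first by [].
split; first by [].
split; split=> //; split.
- move=> L glbL; apply: le_down_antisym.
    exact: is_glb_le glb_down glbL.
  exact: is_glb_le glbL glb_down.
- split=> // L lubL; apply: le_down_antisym.
    exact: is_lub_le lubL lub_down.
  exact: is_lub_le lub_down lubL.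
- move=> L lubL; apply: le_up_antisym.
    exact: is_lub_le lubL lub_up.
  exact: is_lub_le lub_up lubL.
- split=> // L glbL; apply: le_up_antisym.
    exact: is_glb_le glb_up glbL.
  exact: is_glb_le glbL glb_up.
Qed.
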